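(* Let $\beta<1$. Then there exist $\delta_1,\delta_2,\delta_3>0$ (used to define $A_n$ and $B_n$), $\delta_\beta>0$ and a constant $C<\infty$ such that for all sufficiently large $n$, almost surely (i.e. uniformly over the realisation of the skeleton $(Y_k)$), $$\mathbb{P}(A_n\setminus B_n\mid\mathcal{F})\le C\,n^{-\delta_\beta}.$$
   Context: Setup. On one probability space $(\Omega,\mathcal{A},\mathbb{P})$ let: $(Y_n)_{n\ge0}$ be a simple symmetric random walk on $\mathbb{Z}$ with $Y_0=0$; and $\varepsilon=(\varepsilon_y)_{y\in\mathbb{Z}}$ be the environment of the randomly horizontally directed lattice with randomness decaying in power $\beta$: $Q\ge2$ even, $f:\mathbb{Z}\to\{-1,1\}$ $Q$-periodic with $\sum_{y=1}^Q f(y)=0$, $(\rho_y)$ i.i.d. uniform on $\{-1,1\}$, $(\lambda_y)$ independent $\{0,1\}$-valued, independent of $(\rho_y)$, with $\mathbb{P}(\lambda_y=1)=c_0|y|^{-\beta}$ for all sufficiently large $|y|$ (some constant $c_0>0$), and $\varepsilon_y=(1-\lambda_y)f(y)+\lambda_y\rho_y$; $(Y_n)$ is independent of $(\lambda_y,\rho_y)$. Let $\eta_n(y)=\sum_{k=0}^n\mathbf 1_{\{Y_k=y\}}$ and $\mathcal{F}=\sigma(Y_k:k\ge0)$. For $\delta_1,\delta_2,\delta_3>0$ let $A_{n,1}=\{\max_{0\le k\le 2n}|Y_k|<n^{1/2+\delta_1}\}$, $A_{n,2}=\{\max_{y}\eta_{2n-1}(y)<n^{1/2+\delta_2}\}$,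 $A_n=A_{n,1}\cap A_{n,2}$, and $B_n=A_n\cap\{|\sum_{y}\varepsilon_y\eta_{2n-1}(y)|>n^{1/2+\delta_3}\}$. *)

From Stdlib Require Import Reals Lra ZArith List.
Open Scope R_scope.

(** A (realisation of the) skeleton: a nearest-neighbour path on Z from 0.
    Every finite nearest-neighbour path has positive probability under the
    simple symmetric random walk, so "almost surely" over F means "for every
    such path". *)
Definition nn_path (Y : nat -> Z) : Prop :=
  Y 0%nat = 0%Z /\ forall k : nat, Z.abs (Y (S k) - Y k) = 1%Z.

Definition eta (Y : nat -> Z) (m : nat) (y : Z) : nat :=
  length (filter (fun k => Z.eqb (Y k) y) (seq 0 (S m))).

Definition eta2n (Y : nat -> Z) (n : nat) (y : Z) : nat := eta Y (2 * n - 1) y.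

(** The sites that the path can visit up to time 2n: [-2n, 2n]. *)
Definition window (n : nat) : list Z :=
  map (fun i => (Z.of_nat i - Z.of_nat (2 * n))%Z) (seq 0 (S (4 * n))).

Definition Rltb (x y : R) : bool := if Rlt_dec x y then true else false.
Definition Rleb (x y : R) : bool := if Rle_dec x y then true else false.

Definition A_n1 (Y : nat -> Z) (n : nat) (d1 : R) : bool :=
  forallb (fun k => Rltb (IZR (Z.abs (Y k))) (Rpower (INR n) (/2 + d1)))
          (seq 0 (S (2 * n))).

(** A_{n,2} = { max_y eta_{2n-1}(y) < n^{1/2+d2} } (eta vanishes outside the window) *)
Definition A_n2 (Y : nat -> Z) (n : nat) (d2 : R) : bool :=
  forallb (fun y => Rltb (INR (eta2n Y n y)) (Rpower (INR n) (/2 + d2)))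
          (window n).

Definition A_n (Y : nat -> Z) (n : nat) (d1 d2 : R) : bool :=
  A_n1 Y n d1 && A_n2 Y n d2.

Definition upd (e : Z -> Z) (y v : Z) : Z -> Z :=
  fun z => if Z.eqb z y then v else e z.

(** Expectation of G(eps) over the environment eps restricted to the
    (duplicate-free) list of sites ys, where independently for each y:
    with prob. p y, lambda_y = 1 and eps_y = rho_y uniform in {-1,1};
    with prob. 1 - p y, lambda_y = 0 and eps_y = f y. *)
Fixpoint env_expect (p : Z -> R) (f : Z -> Z) (ys : list Z)
  (G : (Z -> Z) -> R) : R :=
  match ys with
  | nil => G f
  | y :: ys' =>
      p y * (/2 * env_expect p f ys' (fun e => G (upd e y 1%Z))
             + /2 * env_expect p f ys' (fun e => G (upd e y (-1)%Z)))
      + (1 - p y) * env_expect p f ys' (fun e => G (upd e y (f y)))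
  end.

Definition Ssum (Y : nat -> Z) (n : nat) (e : Z -> Z) : R :=
  fold_right Rplus 0 (map (fun y => IZR (e y) * INR (eta2n Y n y)) (window n)).

(** P(A_n \ B_n | F) evaluated at the skeleton realisation Y
    (environment independent of Y):
    1_{A_n} * P_env( |sum_y eps_y eta_{2n-1}(y)| <= n^{1/2+d3} ). *)
Definition cond_prob_AnBn (p : Z -> R) (f : Z -> Z) (Y : nat -> Z) (n : nat)
  (d1 d2 d3 : R) : R :=
  (if A_n Y n d1 d2 then 1 else 0) *
  env_expect p f (window n)
    (fun e => if Rleb (Rabs (Ssum Y n e)) (Rpower (INR n) (/2 + d3)) then 1 else 0).

From Stdlib Require Import Reals Lra Lia ZArith List Permutation Bool.
Open Scope R_scope.

(* On A_n the walk has range and local times below t = n^(1/2+d), so a positive fraction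
   of the total local time 2n sits on sites y with |y| large and eta(y) >= T, where the
   environment is random with probability p(y) >= c0 t^(-beta).  Sorting these sites by the
   sign f(y) and by bins of width w for eta(y), some class carries randomisation mass at
   least mus.  Conditionally on all other sites, sum_y eps_y eta(y) is a constant plus
   independent flips of a common sign and almost equal size v >= T/2, each occurring with
   probability p(y)/2 <= 1/2.  A flip of probability q is a fair flip made with probability
   2q, so the question reduces to the bound sqrt(2/(k+1)) on the point probabilities of
   Binomial(k, 1/2): at most (t + w k)/v + 1 numbers of performed fair flips keep the sum in
   [-t, t].  Averaging over k, whose mean and variance are at most the class mass
   mu ~ mus = n^(7d), gives a bound of order n^(-d/2). *)

Lemma Rdiv_le_of_le_mult x y v : 0 < v -> x <= y * v -> x / v <= y.
Proof.
  intros Hv H. apply (Rmult_le_reg_r v); auto.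
  unfold Rdiv; rewrite Rmult_assoc, Rinv_l; lra.
Qed.

Lemma Rle_div_of_mult_le x y v : 0 < v -> x * v <= y -> x <= y / v.
Proof.
  intros Hv H. apply (Rmult_le_reg_r v); auto.
  unfold Rdiv; rewrite Rmult_assoc, Rinv_l; lra.
Qed.

Lemma Rdiv_le_Rdiv a b c d : 0 < b -> 0 < d -> a * d <= c * b -> a / b <= c / d.
Proof.
  intros Hb Hd H. apply Rdiv_le_of_le_mult; auto.
  replace (c / d * b) with (c * b / d) by (field; lra).
  now apply Rle_div_of_mult_le.
Qed.

Lemma Rdiv_le_Rdiv_den x v0 v : 0 <= x -> 0 < v0 -> v0 <= v -> x / v <= x / v0.
Proof.
  intros Hx H0 H1. unfold Rdiv.
  apply Rmult_le_compat_l; auto. apply Rinv_le_contravar; lra.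
Qed.

Lemma Rleb_true x y : Rleb x y = true <-> x <= y.
Proof. unfold Rleb; destruct (Rle_dec x y); split; intros; auto; try discriminate; contradiction. Qed.

Lemma Rleb_false x y : Rleb x y = false <-> y < x.
Proof. unfold Rleb; destruct (Rle_dec x y); split; intros; auto; try discriminate; lra. Qed.

Lemma Rltb_true x y : Rltb x y = true -> x < y.
Proof. unfold Rltb; destruct (Rlt_dec x y); auto; discriminate. Qed.

Lemma INR_Z_to_nat z : (0 <= z)%Z -> INR (Z.to_nat z) = IZR z.
Proof. intros H. rewrite INR_IZR_INZ, Z2Nat.id; auto. Qed.

Section ListSum.
Context {A : Type}.

Definition lsum (L : list A) (g : A -> R) : R := fold_right Rplus 0 (map g L).

Lemma lsum_nil g : lsum nil g = 0.
Proof. reflexivity. Qed.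

Lemma lsum_cons a L g : lsum (a :: L) g = g a + lsum L g.
Proof. reflexivity. Qed.

Lemma lsum_app L1 L2 g : lsum (L1 ++ L2) g = lsum L1 g + lsum L2 g.
Proof.
  induction L1 as [|a L1 IH]; cbn [app]; [unfold lsum at 2; simpl; ring|].
  rewrite !lsum_cons, IH; ring.
Qed.

Lemma lsum_ext_in L g h : (forall x, In x L -> g x = h x) -> lsum L g = lsum L h.
Proof.
  induction L; intros H; auto.
  rewrite !lsum_cons, H, IHL by (auto with datatypes); auto.
Qed.

Lemma lsum_le L g h : (forall x, In x L -> g x <= h x) -> lsum L g <= lsum L h.
Proof.
  induction L; intros H; [unfold lsum; simpl; lra|].
  rewrite !lsum_cons. apply Rplus_le_compat; auto with datatypes.
Qed.

Lemma lsum_plus L g h : lsum L (fun x => g x + h x) = lsum L g + lsum L h.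
Proof. induction L; [unfold lsum; simpl; ring|]. rewrite !lsum_cons, IHL; ring. Qed.

Lemma lsum_scal L a g : lsum L (fun x => a * g x) = a * lsum L g.
Proof. induction L; [unfold lsum; simpl; ring|]. rewrite !lsum_cons, IHL; ring. Qed.

Lemma lsum_const L a : lsum L (fun _ => a) = INR (length L) * a.
Proof. induction L; simpl length; [unfold lsum; simpl; ring|]. rewrite lsum_cons, IHL, S_INR; ring. Qed.

Lemma lsum_filter (P : A -> bool) L g :
  lsum L (fun x => if P x then g x else 0) = lsum (filter P L) g.
Proof.
  induction L as [|a L IH]; auto. rewrite lsum_cons. simpl filter.
  destruct (P a); rewrite ?lsum_cons, IH; ring.
Qed.

Lemma INR_length_filter (P : A -> bool) L :
  INR (length (filter P L)) = lsum L (fun x => if P x then 1 else 0).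
Proof. rewrite lsum_filter, lsum_const; ring. Qed.

End ListSum.

Lemma lsum_map {A B} (h : B -> A) L g : lsum (map h L) g = lsum L (fun x => g (h x)).
Proof. unfold lsum. now rewrite map_map. Qed.

Section Exchange.
Context {A B : Type} (eqb : B -> B -> bool) (Heqb : forall x y, eqb x y = true <-> x = y).

Lemma lsum_indicator (Cs : list B) b r : NoDup Cs -> In b Cs ->
  lsum Cs (fun c => if eqb b c then r else 0) = r.
Proof.
  induction Cs as [|c Cs IH]; intros Hnd Hin; [destruct Hin|].
  inversion Hnd; subst. rewrite lsum_cons. destruct Hin as [->|Hin].
  - replace (eqb b b) with true by (symmetry; now apply Heqb).
    rewrite (lsum_ext_in _ _ (fun _ => 0)), lsum_const; [ring|].
    intros c' Hc'. destruct (eqb b c') eqn:E; auto. apply Heqb in E; subst; contradiction.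
  - rewrite IH; auto. destruct (eqb b c) eqn:E; [apply Heqb in E; subst; contradiction|ring].
Qed.

Lemma lsum_exchange (Cs : list B) (L : list A) (cls : A -> B) g :
  NoDup Cs -> (forall a, In a L -> In (cls a) Cs) ->
  lsum Cs (fun c => lsum L (fun a => if eqb (cls a) c then g a else 0)) = lsum L g.
Proof.
  intros Hnd. induction L as [|a L IH]; intros Hin.
  - rewrite (lsum_ext_in Cs _ (fun _ => 0)) by reflexivity. rewrite lsum_const, lsum_nil; ring.
  - rewrite (lsum_ext_in Cs _ (fun c => (if eqb (cls a) c then g a else 0)
        + lsum L (fun a0 => if eqb (cls a0) c then g a0 else 0))) by reflexivity.
    rewrite lsum_plus, IH, lsum_indicator, lsum_cons; auto with datatypes.
Qed.

End Exchange.

Lemma lsum_pigeonhole {B} (Cs : list B) (m : B -> R) X : Cs <> nil -> X <= lsum Cs m ->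
  exists c, In c Cs /\ X / INR (length Cs) <= m c.
Proof.
  intros Hne HX.
  assert (Hmax : exists c, In c Cs /\ lsum Cs m <= INR (length Cs) * m c).
  { clear HX. induction Cs as [|c Cs IH]; [contradiction|].
    destruct Cs as [|c' Cs'].
    - exists c. split; [left; auto|]. rewrite lsum_cons, lsum_nil; simpl; lra.
    - destruct IH as [d [Hd Hs]]; [discriminate|].
      rewrite lsum_cons. change (length (c :: c' :: Cs')) with (S (length (c' :: Cs'))).
      rewrite S_INR. assert (0 <= INR (length (c' :: Cs'))) by apply pos_INR.
      destruct (Rle_dec (m d) (m c)).
      + exists c; split; [left; auto|]. nra.
      + exists d; split; [right; auto|]. nra. }
  destruct Hmax as [c [Hc Hs]]. exists c; split; auto.
  assert (0 < INR (length Cs)) by (apply lt_0_INR; destruct Cs; [contradiction|simpl; lia]).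
  apply Rdiv_le_of_le_mult; lra.
Qed.

Lemma lsum_prefix_between {A} (L : list A) g : (forall x, In x L -> 0 <= g x <= 1) ->
  forall m, 0 < m -> m <= lsum L g -> exists k, m <= lsum (firstn k L) g <= m + 1.
Proof.
  induction L as [|a L IH]; intros Hg m Hm0 Hm; [rewrite lsum_nil in Hm; lra|].
  rewrite lsum_cons in Hm. pose proof (Hg a (or_introl eq_refl)).
  destruct (Rle_dec m (g a)).
  - exists 1%nat. simpl firstn. rewrite lsum_cons, lsum_nil. lra.
  - destruct (Rle_dec (m - g a) 0).
    + exists 1%nat. simpl firstn. rewrite lsum_cons, lsum_nil. lra.
    + destruct (IH (fun x Hx => Hg x (or_intror Hx)) (m - g a)) as [k Hk]; [lra|lra|].
      exists (S k). simpl firstn. rewrite lsum_cons. lra.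
Qed.


Lemma lsum_seq_last N phi : lsum (seq 0 (S N)) phi = lsum (seq 0 N) phi + phi N.
Proof. rewrite seq_S, lsum_app, lsum_cons, lsum_nil. cbn [Nat.add]. ring. Qed.

Lemma lsum_seq_first N phi :
  lsum (seq 0 (S N)) phi = phi O + lsum (seq 0 N) (fun i => phi (S i)).
Proof. simpl seq. rewrite lsum_cons, <- seq_shift, lsum_map. reflexivity. Qed.

Lemma lsum_seq_ext N phi psi : (forall i, (i < N)%nat -> phi i = psi i) ->
  lsum (seq 0 N) phi = lsum (seq 0 N) psi.
Proof. intros H. apply lsum_ext_in. intros i Hi. apply in_seq in Hi. apply H; lia. Qed.

Lemma lsum_seq_le N phi psi : (forall i, (i < N)%nat -> phi i <= psi i) ->
  lsum (seq 0 N) phi <= lsum (seq 0 N) psi.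
Proof. intros H. apply lsum_le. intros i Hi. apply in_seq in Hi. apply H; lia. Qed.

Definition interval_indicator (a b x : R) : R := if Rleb a x && Rleb x b then 1 else 0.

Lemma interval_indicator_in a b x : a <= x <= b -> interval_indicator a b x = 1.
Proof.
  intros [H1 H2]. unfold interval_indicator.
  apply Rleb_true in H1, H2. now rewrite H1, H2.
Qed.

Lemma interval_indicator_nonneg a b x : 0 <= interval_indicator a b x.
Proof. unfold interval_indicator. destruct (_ && _); lra. Qed.

Lemma count_in_interval a b N :
  lsum (seq 0 N) (fun i => interval_indicator a b (INR i))
  <= Rmax 0 (Rmin b (INR N - 1) - a + 1).
Proof.
  unfold interval_indicator. induction N.
  - apply Rmax_l.
  - rewrite lsum_seq_last, S_INR.
    destruct (Rleb a (INR N)) eqn:E1; destruct (Rleb (INR N) b) eqn:E2; simpl;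
    try apply Rleb_true in E1; try apply Rleb_true in E2;
    try apply Rleb_false in E1; try apply Rleb_false in E2;
    revert IHN; unfold Rmax, Rmin;
    repeat match goal with |- context [Rle_dec ?x ?y] => destruct (Rle_dec x y) end; intros;
    repeat match goal with H : context [Rle_dec ?x ?y] |- _ => destruct (Rle_dec x y) end; lra.
Qed.

(** * Independent flips *)

(* [flip_expect [(q_1,d_1); ...; (q_m,d_m)] F c] is E F(c + ξ_1 d_1 + ... + ξ_m d_m) for
   independent ξ_i ~ Bernoulli(q_i). *)
Fixpoint flip_expect (L : list (R * R)) (F : R -> R) (c : R) : R :=
  match L with
  | nil => F c
  | (q, d) :: L' => q * flip_expect L' F (c + d) + (1 - q) * flip_expect L' F c
  end.

Definition probs_in_unit (L : list (R * R)) : Prop := forall qd, In qd L -> 0 <= fst qd <= 1.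

Lemma flip_expect_app L1 L2 F c :
  flip_expect (L1 ++ L2) F c = flip_expect L1 (flip_expect L2 F) c.
Proof.
  revert c. induction L1 as [|[q d] L IH]; intros; simpl; auto. rewrite !IH; auto.
Qed.

Lemma flip_expect_perm L1 L2 : Permutation L1 L2 ->
  forall F c, flip_expect L1 F c = flip_expect L2 F c.
Proof.
  induction 1 as [|[q d] L1 L2 _ IH| [q1 d1] [q2 d2] L|]; intros F c; simpl; auto.
  - rewrite !IH; auto.
  - replace (c + d2 + d1) with (c + d1 + d2) by ring. ring.
  - congruence.
Qed.

Lemma flip_expect_le L : probs_in_unit L ->
  forall F G c, (forall x, F x <= G x) -> flip_expect L F c <= flip_expect L G c.
Proof.
  induction L as [|[q d] L IH]; intros Hok F G c H; simpl; auto.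
  assert (Hq := Hok (q, d) (or_introl eq_refl)); simpl in Hq.
  assert (Hok' : probs_in_unit L) by (intros x Hx; apply Hok; right; auto).
  pose proof (IH Hok' F G (c + d) H). pose proof (IH Hok' F G c H). nra.
Qed.

Lemma flip_expect_const L B c : flip_expect L (fun _ => B) c = B.
Proof. revert c. induction L as [|[q d] L IH]; intros; simpl; auto. rewrite !IH; ring. Qed.

Lemma flip_expect_le_sup L : probs_in_unit L ->
  forall F B c, (forall x, F x <= B) -> flip_expect L F c <= B.
Proof.
  intros Hok F B c H. rewrite <- (flip_expect_const L B c). now apply flip_expect_le.
Qed.

Lemma env_expect_ext p f ys G1 G2 : (forall e, G1 e = G2 e) ->
  env_expect p f ys G1 = env_expect p f ys G2.
Proof.
  revert G1 G2. induction ys as [|y ys IH]; intros G1 G2 H; simpl; auto.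
  rewrite (IH (fun e => G1 (upd e y 1%Z)) (fun e => G2 (upd e y 1%Z))),
    (IH (fun e => G1 (upd e y (-1)%Z)) (fun e => G2 (upd e y (-1)%Z))),
    (IH (fun e => G1 (upd e y (f y))) (fun e => G2 (upd e y (f y)))); auto.
Qed.

(* Given the base configuration eps = f, a site y keeps eps_y = f y except with probability
   p y / 2, when eps_y = - f y: it is a flip of the weighted sum by -2 f(y) a(y). *)
Lemma env_expect_as_flips p f (a : Z -> R) (F : R -> R) L :
  NoDup L -> (forall y, f y = 1%Z \/ f y = (-1)%Z) ->
  forall c,
  env_expect p f L (fun e => F (c + lsum L (fun y => IZR (e y) * a y)))
  = flip_expect (map (fun y => (p y / 2, -2 * IZR (f y) * a y)) L) F
       (c + lsum L (fun y => IZR (f y) * a y)).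
Proof.
  intros Hnd Hf. induction L as [|y L IH]; intros c; simpl; auto.
  inversion Hnd as [|y' L' Hny HndL]; subst.
  assert (Hupd : forall e v,
    lsum L (fun z => IZR (upd e y v z) * a z) = lsum L (fun z => IZR (e z) * a z)).
  { intros e v; apply lsum_ext_in; intros z Hz; unfold upd.
    destruct (Z.eqb_spec z y); [subst; contradiction | auto]. }
  assert (Hat : forall e v, upd e y v y = v) by (intros; unfold upd; now rewrite Z.eqb_refl).
  assert (Hset : forall v, env_expect p f L
      (fun e => F (c + lsum (y :: L) (fun z => IZR (upd e y v z) * a z)))
    = flip_expect (map (fun z => (p z / 2, -2 * IZR (f z) * a z)) L) F
        ((c + IZR v * a y) + lsum L (fun z => IZR (f z) * a z))).
  { intros v. rewrite <- IH by auto. apply env_expect_ext; intros e.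
    rewrite lsum_cons, Hupd, Hat. f_equal; ring. }
  rewrite !Hset, lsum_cons.
  set (S := lsum L (fun z => IZR (f z) * a z)).
  destruct (Hf y) as [H|H]; rewrite H; simpl.
  - replace (c + -1 * a y + S) with (c + (1 * a y + S) + -2 * 1 * a y) by ring.
    replace (c + 1 * a y + S) with (c + (1 * a y + S)) by ring. field.
  - replace (c + 1 * a y + S) with (c + (-1 * a y + S) + -2 * -1 * a y) by ring.
    replace (c + -1 * a y + S) with (c + (-1 * a y + S)) by ring. field.
Qed.

(** * Binomial anticoncentration *)

(* [fair_expect k H j] is E H(j + B) and [binom_half k i] is P(B = i), for B ~ Binomial(k, 1/2). *)
Fixpoint fair_expect (k : nat) (H : nat -> R) (j : nat) : R :=
  match k with O => H j | S k' => /2 * fair_expect k' H (S j) + /2 * fair_expect k' H j end.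

Fixpoint binom_half (k i : nat) : R :=
  match k, i with
  | O, O => 1
  | O, S _ => 0
  | S k', O => binom_half k' O / 2
  | S k', S i' => (binom_half k' i' + binom_half k' (S i')) / 2
  end.

Lemma binom_half_out k i : (k < i)%nat -> binom_half k i = 0.
Proof.
  revert i. induction k; intros [|i] H; simpl; try lia; auto.
  rewrite !IHk by lia. lra.
Qed.

Lemma binom_half_nonneg k i : 0 <= binom_half k i.
Proof.
  revert i. induction k; intros [|i]; simpl; try lra.
  - pose proof (IHk O); lra.
  - pose proof (IHk i); pose proof (IHk (S i)); lra.
Qed.

Lemma fair_expect_as_sum k H j0 N : (k < N)%nat ->
  fair_expect k H j0 = lsum (seq 0 N) (fun i => binom_half k i * H (j0 + i)%nat).
Proof.
  revert H j0 N. induction k; intros H j0 N HN; (destruct N as [|N]; [lia|]);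
    rewrite lsum_seq_first.
  - rewrite (lsum_seq_ext N _ (fun _ => 0 * 0)) by (intros; simpl; ring).
    rewrite lsum_scal, Nat.add_0_r. simpl. ring.
  - simpl fair_expect. rewrite (IHk H (S j0) N), (IHk H j0 (S N)), lsum_seq_first by lia.
    rewrite (lsum_seq_ext N (fun i => binom_half (S k) (S i) * H (j0 + S i)%nat)
      (fun i => /2 * (binom_half k i * H (S j0 + i)%nat)
                + /2 * (binom_half k (S i) * H (j0 + S i)%nat))).
    + rewrite lsum_plus, !lsum_scal, Nat.add_0_r. simpl binom_half. field.
    + intros i _. simpl binom_half. replace (j0 + S i)%nat with (S j0 + i)%nat by lia. field.
Qed.

Lemma binom_half_closed k i : (i <= k)%nat -> binom_half k i = C k i / 2 ^ k.
Proof.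
  assert (HC0 : forall n, C n 0 = 1).
  { intros n. unfold C. rewrite Nat.sub_0_r. simpl.
    pose proof (INR_fact_lt_0 n). field. lra. }
  assert (HCn : forall n, C n n = 1).
  { intros n. unfold C. rewrite Nat.sub_diag. simpl.
    pose proof (INR_fact_lt_0 n). field. lra. }
  revert i. induction k; intros i Hi.
  - replace i with O by lia. simpl. rewrite HC0. field.
  - pose proof (pow_lt 2 k). destruct i as [|i]; simpl binom_half.
    + rewrite IHk, !HC0 by lia. simpl. field; lra.
    + destruct (Nat.eq_dec i k) as [->|Hne].
      * rewrite (binom_half_out k (S k)), IHk, !HCn by lia. simpl. field; lra.
      * rewrite !IHk, <- pascal by lia. simpl. field; lra.
Qed.

Definition central_binom (r : nat) : R := C (2 * r) r / 2 ^ (2 * r).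

Lemma central_binom_S r :
  central_binom (S r) = central_binom r * (2 * INR r + 1) / (2 * INR r + 2).
Proof.
  unfold central_binom, C. replace (2 * S r - S r)%nat with (S r) by lia.
  replace (2 * r - r)%nat with r by lia.
  replace (2 * S r)%nat with (S (S (2 * r))) by lia.
  rewrite !fact_simpl, !mult_INR, !S_INR, mult_INR.
  replace (2 ^ S (S (2 * r))) with (4 * 2 ^ (2 * r)) by (simpl; ring).
  pose proof (INR_fact_lt_0 r). pose proof (INR_fact_lt_0 (2 * r)).
  pose proof (pow_lt 2 (2 * r)). pose proof (pos_INR r). simpl INR.
  field. repeat split; lra.
Qed.

Lemma central_binom_nonneg r : 0 <= central_binom r.
Proof.
  unfold central_binom. rewrite <- (binom_half_closed (2 * r) r) by lia.
  apply binom_half_nonneg.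
Qed.

Lemma central_binom_sq_le r : central_binom r * central_binom r <= 1 / (2 * INR r + 1).
Proof.
  induction r.
  - unfold central_binom, C. simpl. lra.
  - rewrite central_binom_S, S_INR. pose proof (pos_INR r).
    pose proof (central_binom_nonneg r). set (u := central_binom r) in *.
    assert (Hu : u * u * (2 * INR r + 1) <= 1).
    { apply (Rmult_le_compat_r (2 * INR r + 1)) in IHr; [|lra].
      replace (1 / (2 * INR r + 1) * (2 * INR r + 1)) with 1 in IHr by (field; lra). lra. }
    apply (Rmult_le_reg_r ((2 * INR r + 2) * (2 * INR r + 2) * (2 * (INR r + 1) + 1))).
    { nra. }
    replace (u * (2 * INR r + 1) / (2 * INR r + 2) * (u * (2 * INR r + 1) / (2 * INR r + 2)) *
      ((2 * INR r + 2) * (2 * INR r + 2) * (2 * (INR r + 1) + 1)))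
      with (u * u * (2 * INR r + 1) * ((2 * INR r + 1) * (2 * INR r + 3))) by (field; lra).
    replace (1 / (2 * (INR r + 1) + 1)
      * ((2 * INR r + 2) * (2 * INR r + 2) * (2 * (INR r + 1) + 1)))
      with ((2 * INR r + 2) * (2 * INR r + 2)) by (field; lra).
    assert (0 <= (2 * INR r + 1) * (2 * INR r + 3)) by nra.
    nra.
Qed.

Lemma binom_half_even_le r i : binom_half (2 * r) i <= central_binom r.
Proof.
  destruct (le_lt_dec i (2 * r)) as [Hi|Hi].
  - rewrite binom_half_closed by lia. unfold central_binom.
    pose proof (pow_lt 2 (2 * r)). apply Rmult_le_compat_r.
    + apply Rlt_le, Rinv_0_lt_compat; lra.
    + now apply C_maj.
  - rewrite binom_half_out by lia. apply central_binom_nonneg.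
Qed.

Lemma binom_half_le_sqrt k i : binom_half k i <= sqrt (2 / (INR k + 1)).
Proof.
  destruct (Nat.Even_or_Odd k) as [[r ->]|[r ->]]; pose proof (pos_INR r).
  - eapply Rle_trans; [apply binom_half_even_le|].
    rewrite <- (sqrt_square (central_binom r)) by apply central_binom_nonneg.
    apply sqrt_le_1_alt. eapply Rle_trans; [apply central_binom_sq_le|].
    rewrite mult_INR. simpl INR. apply Rdiv_le_Rdiv; lra.
  - assert (Hodd : binom_half (S (2 * r)) i <= central_binom r).
    { pose proof (binom_half_nonneg (2 * r) 0).
      destruct i as [|i].
      - change (binom_half (S (2 * r)) 0) with (binom_half (2 * r) 0 / 2).
        pose proof (binom_half_even_le r 0); lra.
      - change (binom_half (S (2 * r)) (S i))
          with ((binom_half (2 * r) i + binom_half (2 * r) (S i)) / 2).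
        pose proof (binom_half_even_le r i); pose proof (binom_half_even_le r (S i)); lra. }
    replace (2 * r + 1)%nat with (S (2 * r)) by lia.
    eapply Rle_trans; [apply Hodd|].
    rewrite <- (sqrt_square (central_binom r)) by apply central_binom_nonneg.
    apply sqrt_le_1_alt. eapply Rle_trans; [apply central_binom_sq_le|].
    rewrite S_INR, mult_INR. simpl INR. apply Rdiv_le_Rdiv; lra.
Qed.

Lemma fair_expect_interval_le k H a b : 0 <= b - a + 1 ->
  (forall j, (j <= k)%nat -> 0 <= H j <= interval_indicator a b (INR j)) ->
  fair_expect k H 0 <= sqrt (2 / (INR k + 1)) * (b - a + 1).
Proof.
  intros Hab HH. rewrite (fair_expect_as_sum k H 0 (S k)) by lia.
  set (bmax := sqrt (2 / (INR k + 1))).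
  apply Rle_trans with (lsum (seq 0 (S k)) (fun j => bmax * interval_indicator a b (INR j))).
  - apply lsum_seq_le. intros j Hj. cbn [Nat.add]. specialize (HH j ltac:(lia)).
    pose proof (binom_half_le_sqrt k j). pose proof (binom_half_nonneg k j).
    apply Rmult_le_compat; unfold bmax in *; lra.
  - rewrite lsum_scal. apply Rmult_le_compat_l; [apply sqrt_pos|].
    eapply Rle_trans; [apply count_in_interval|].
    unfold Rmax, Rmin; repeat destruct (Rle_dec _ _); lra.
Qed.

(** * Flips of almost equal size *)

(* [bern_expect [r_1; ...; r_m] g k] is E g(k + ξ_1 + ... + ξ_m) for independent
   ξ_i ~ Bernoulli(r_i). *)
Fixpoint bern_expect (rs : list R) (g : nat -> R) (k : nat) : R :=
  match rs with
  | nil => g k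
  | r :: rs' => r * bern_expect rs' g (S k) + (1 - r) * bern_expect rs' g k
  end.

Lemma bern_expect_le rs : (forall r, In r rs -> 0 <= r <= 1) ->
  forall g h k0, (forall k, g k <= h k) -> bern_expect rs g k0 <= bern_expect rs h k0.
Proof.
  induction rs as [|r rs IH]; intros Hr g h k0 H; simpl; auto.
  assert (0 <= r <= 1) by (apply Hr; left; auto).
  assert (IH' : forall k, bern_expect rs g k <= bern_expect rs h k)
    by (intros; apply IH; auto; intros; apply Hr; right; auto).
  pose proof (IH' (S k0)); pose proof (IH' k0). nra.
Qed.

Lemma bern_expect_quadratic rs a b m k0 :
  bern_expect rs (fun k => a + b * (INR k - m) ^ 2) k0
  = a + b * ((INR k0 + lsum rs (fun r => r) - m) ^ 2 + lsum rs (fun r => r * (1 - r))).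
Proof.
  revert k0. induction rs as [|r rs IH]; intros; cbn [bern_expect].
  - rewrite !lsum_nil. ring.
  - rewrite !IH, !lsum_cons, S_INR. ring.
Qed.

Definition in_band (s v w : R) (qd : R * R) : Prop :=
  exists a, v <= a <= v + w /\ snd qd = -2 * s * a.

Definition fair_band s v w (A : list (R * R)) : Prop :=
  forall qd, In qd A -> fst qd = /2 /\ in_band s v w qd.

Definition half_band s v w (L : list (R * R)) : Prop :=
  forall qd, In qd L -> 0 <= fst qd <= /2 /\ in_band s v w qd.

Definition band_reach c0 s v w x (j : nat) : Prop :=
  exists S, x = c0 - 2 * s * S /\ v * INR j <= S <= (v + w) * INR j.

Lemma flip_expect_fair_band_le s v w c0 F H A :
  fair_band s v w A -> (forall x j, band_reach c0 s v w x j -> F x <= H j) ->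
  forall x j, band_reach c0 s v w x j -> flip_expect A F x <= fair_expect (length A) H j.
Proof.
  induction A as [|[q d] A IH]; intros Hb HF x j Hx; simpl; auto.
  destruct (Hb (q, d) (or_introl eq_refl)) as [Hq [a [Ha Hd]]]; simpl in Hq, Hd; subst q d.
  assert (HbA : fair_band s v w A) by (intros z Hz; apply Hb; right; auto).
  assert (H1 : flip_expect A F (x + -2 * s * a) <= fair_expect (length A) H (S j)).
  { apply IH; auto. destruct Hx as [S [HS1 HS2]]. exists (S + a). split.
    - rewrite HS1; ring.
    - rewrite S_INR. nra. }
  assert (H2 : flip_expect A F x <= fair_expect (length A) H j) by (apply IH; auto).
  lra.
Qed.

(* A flip of probability q <= 1/2 is a fair flip performed with probability 2q; the number
   of fair flips performed is then a sum of Bernoulli(2q) variables. *)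
Lemma flip_expect_half_band_le s v w F g L :
  half_band s v w L ->
  (forall A c, fair_band s v w A -> flip_expect A F c <= g (length A)) ->
  forall A c, fair_band s v w A ->
  flip_expect (L ++ A) F c <= bern_expect (map (fun qd => 2 * fst qd) L) g (length A).
Proof.
  induction L as [|[q d] L IH]; intros Hb Hbase A c HA; simpl; auto.
  destruct (Hb (q, d) (or_introl eq_refl)) as [Hq Hd]; simpl in Hq.
  assert (HbL : half_band s v w L) by (intros z Hz; apply Hb; right; auto).
  assert (HA' : fair_band s v w ((/2, d) :: A)).
  { intros z [<-|Hz]; [split; auto | apply HA; auto]. }
  pose proof (IH HbL Hbase _ c HA') as H1. simpl length in H1.
  rewrite <- (flip_expect_perm _ _ (Permutation_middle L A (/2, d)) F c) in H1. simpl in H1.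
  pose proof (IH HbL Hbase _ c HA) as H0.
  pose proof (IH HbL Hbase _ (c + d) HA) as H0'.
  set (X := flip_expect (L ++ A) F (c + d)) in *. set (Y := flip_expect (L ++ A) F c) in *.
  set (B1 := bern_expect (map (fun qd => 2 * fst qd) L) g (S (length A))) in *.
  set (B0 := bern_expect (map (fun qd => 2 * fst qd) L) g (length A)) in *.
  replace (q * X + (1 - q) * Y) with (2 * q * (/2 * X + (1 - /2) * Y) + (1 - 2 * q) * Y)
    by field.
  apply Rplus_le_compat; apply Rmult_le_compat_l; lra.
Qed.

Definition small_indicator (t x : R) : R := if Rleb (Rabs x) t then 1 else 0.

Definition fair_band_bound t v w (k : nat) : R :=
  ((t + w * INR k) / v + 1) * sqrt (2 / (INR k + 1)).

(* Along j fair flips the sum moves by between 2 v j and 2 (v + w) j, so at most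
   (t + w k) / v + 1 values of j keep it in [-t, t]; each has probability
   at most sqrt (2 / (k + 1)). *)
Lemma flip_expect_fair_band_small s v w t : (s = 1 \/ s = -1) -> 0 < v -> 0 <= w -> 0 <= t ->
  forall A c, fair_band s v w A ->
  flip_expect A (small_indicator t) c <= fair_band_bound t v w (length A).
Proof.
  intros Hs Hv Hw Ht A c HA.
  set (k := length A). set (A0 := (s * c - t) / 2).
  set (H := fun j : nat => interval_indicator (A0 - w * INR j) (A0 + t) (v * INR j)).
  assert (HF : forall x j, band_reach c s v w x j -> small_indicator t x <= H j).
  { intros x j [S [HS1 HS2]]. unfold small_indicator, H.
    destruct (Rleb (Rabs x) t) eqn:E; [|apply interval_indicator_nonneg].
    apply Rleb_true in E. pose proof (Rle_abs x). pose proof (Rle_abs (- x)).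
    rewrite Rabs_Ropp in *.
    assert (HS : A0 <= S <= A0 + t) by (unfold A0; destruct Hs; subst s; lra).
    rewrite interval_indicator_in; lra. }
  eapply Rle_trans.
  { apply (flip_expect_fair_band_le s v w c _ H A HA HF c 0). exists 0. simpl. split; lra. }
  set (a := (A0 - w * INR k) / v). set (b := (A0 + t) / v).
  unfold fair_band_bound. fold k. rewrite Rmult_comm.
  replace ((t + w * INR k) / v + 1) with (b - a + 1) by (unfold a, b; field; lra).
  pose proof (pos_INR k).
  apply fair_expect_interval_le.
  - unfold a, b. replace ((A0 + t) / v - (A0 - w * INR k) / v) with ((t + w * INR k) / v)
      by (field; lra).
    assert (0 <= (t + w * INR k) / v) by (apply Rle_div_of_mult_le; nra). lra.
  - intros j Hj. split; [apply interval_indicator_nonneg|]. unfold H, interval_indicator at 1.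
    destruct (Rleb (A0 - w * INR j) (v * INR j)) eqn:E1;
      destruct (Rleb (v * INR j) (A0 + t)) eqn:E2; simpl; try apply interval_indicator_nonneg.
    apply Rleb_true in E1, E2. assert (INR j <= INR k) by (apply le_INR; lia).
    rewrite interval_indicator_in; [lra|]. split.
    + unfold a; apply Rdiv_le_of_le_mult; nra.
    + unfold b; apply Rle_div_of_mult_le; lra.
Qed.

Definition band_bound t v w mu : R :=
  ((t + 2 * w * mu) / v + 1) * sqrt (4 / mu) + 8 * (t / v + 1 + w * mu / v) / mu + 4 * w / v.

(* Quadratic majorant of [fair_band_bound] around mu, matching [band_bound] after averaging
   over a count with mean and variance at most mu. *)
Lemma fair_band_bound_le_quadratic t v w mu k : 0 < v -> 0 <= w -> 0 <= t -> 0 < mu ->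
  fair_band_bound t v w k <= ((t + 2 * w * mu) / v + 1) * sqrt (4 / mu)
     + (8 * (t / v + 1 + w * mu / v) / (mu * mu) + 4 * (w / v) / mu) * (INR k - mu) ^ 2.
Proof.
  intros Hv Hw Ht Hmu. unfold fair_band_bound.
  set (x := INR k). assert (Hx : 0 <= x) by apply pos_INR.
  set (X := t / v). set (Wv := w / v).
  assert (HX : 0 <= X) by (apply Rle_div_of_mult_le; lra).
  assert (HW : 0 <= Wv) by (apply Rle_div_of_mult_le; lra).
  replace ((t + w * x) / v) with (X + Wv * x) by (unfold X, Wv; field; lra).
  replace ((t + 2 * w * mu) / v) with (X + 2 * Wv * mu) by (unfold X, Wv; field; lra).
  replace (w * mu / v) with (Wv * mu) by (unfold Wv; field; lra).
  pose proof (sqrt_pos (2 / (x + 1))) as Hs0.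
  set (D := (x - mu) ^ 2). assert (HD : 0 <= D) by (unfold D; apply pow2_ge_0).
  assert (0 <= X + Wv * x + 1) by nra.
  destruct (Rle_dec D (mu * mu / 4)) as [Hnear|Hfar].
  - assert (Hxr : mu / 2 <= x <= 2 * mu) by (unfold D in Hnear; nra).
    assert (Hsq : sqrt (2 / (x + 1)) <= sqrt (4 / mu))
      by (apply sqrt_le_1_alt, Rdiv_le_Rdiv; lra).
    assert ((X + Wv * x + 1) * sqrt (2 / (x + 1)) <= (X + 2 * Wv * mu + 1) * sqrt (4 / mu))
      by (apply Rmult_le_compat; nra).
    assert (0 <= 8 * (X + 1 + Wv * mu) / (mu * mu) + 4 * Wv / mu).
    { apply Rplus_le_le_0_compat; apply Rle_div_of_mult_le; nra. }
    nra.
  - assert (Hs2 : sqrt (2 / (x + 1)) <= 2).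
    { apply Rle_trans with (sqrt (2 * 2)).
      - apply sqrt_le_1_alt, Rdiv_le_of_le_mult; lra.
      - rewrite sqrt_square; lra. }
    set (u := D / mu).
    assert (HDu : D = u * mu) by (unfold u; field; lra).
    assert (Hu : mu / 4 <= u) by (apply Rle_div_of_mult_le; lra).
    assert (Habs : Rabs (x - mu) <= 2 * u).
    { assert (Rabs (x - mu) * Rabs (x - mu) = D).
      { unfold D. rewrite <- Rabs_mult, Rabs_right; [ring|apply Rle_ge, Rle_0_sqr]. }
      assert (mu / 2 <= Rabs (x - mu)) by (pose proof (Rabs_pos (x - mu)); nra). nra. }
    assert (Hxx : x <= mu + 2 * u) by (pose proof (Rle_abs (x - mu)); lra).
    fold D. rewrite HDu.
    replace ((8 * (X + 1 + Wv * mu) / (mu * mu) + 4 * Wv / mu) * (u * mu))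
      with (8 * (X + 1) * (u / mu) + 8 * Wv * u + 4 * Wv * u) by (field; lra).
    assert (Hum : 1 / 4 <= u / mu) by (apply Rle_div_of_mult_le; lra).
    assert ((X + Wv * x + 1) * sqrt (2 / (x + 1)) <= (X + Wv * x + 1) * 2)
      by (apply Rmult_le_compat_l; lra).
    assert (0 <= (X + 2 * Wv * mu + 1) * sqrt (4 / mu)) by (apply Rmult_le_pos; [nra|apply sqrt_pos]).
    nra.
Qed.

Lemma flip_expect_half_band_small s v w t L :
  (s = 1 \/ s = -1) -> 0 < v -> 0 <= w -> 0 <= t -> half_band s v w L ->
  let mu := lsum L (fun qd => 2 * fst qd) in
  0 < mu -> forall c, flip_expect L (small_indicator t) c <= band_bound t v w mu.
Proof.
  intros Hs Hv Hw Ht HL mu Hmu c.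
  set (rs := map (fun qd => 2 * fst qd) L).
  assert (Hmu_rs : lsum rs (fun r => r) = mu) by (unfold rs; rewrite lsum_map; reflexivity).
  assert (Hrs : forall r, In r rs -> 0 <= r <= 1).
  { intros r Hr. apply in_map_iff in Hr. destruct Hr as [qd [<- Hqd]].
    destruct (HL qd Hqd) as [H _]. lra. }
  rewrite <- (app_nil_r L).
  eapply Rle_trans.
  { apply (flip_expect_half_band_le s v w _ (fair_band_bound t v w) L HL).
    - intros A c' HA; now apply (flip_expect_fair_band_small s).
    - intros qd []. }
  eapply Rle_trans.
  { apply bern_expect_le; [exact Hrs|]. intros k. apply (fair_band_bound_le_quadratic t v w mu k); auto. }
  fold rs. rewrite bern_expect_quadratic, Hmu_rs. simpl length. simpl INR.
  replace (0 + mu - mu) with 0 by ring.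
  assert (Hvar : lsum rs (fun r => r * (1 - r)) <= mu).
  { rewrite <- Hmu_rs. apply lsum_le. intros r Hr. specialize (Hrs r Hr). nra. }
  assert (HG : 0 <= 8 * (t / v + 1 + w * mu / v) / (mu * mu) + 4 * (w / v) / mu).
  { assert (0 <= t / v) by (apply Rle_div_of_mult_le; lra).
    assert (0 <= w / v) by (apply Rle_div_of_mult_le; lra).
    assert (0 <= w * mu / v) by (apply Rle_div_of_mult_le; nra).
    apply Rplus_le_le_0_compat; apply Rle_div_of_mult_le; nra. }
  assert (E : (8 * (t / v + 1 + w * mu / v) / (mu * mu) + 4 * (w / v) / mu) * mu
              = 8 * (t / v + 1 + w * mu / v) / mu + 4 * w / v) by (field; lra).
  unfold band_bound. nra.
Qed.

(** * Local times of the skeleton *)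

Lemma window_In n y : In y (window n) <-> (- Z.of_nat (2 * n) <= y <= Z.of_nat (2 * n))%Z.
Proof.
  unfold window. rewrite in_map_iff. split.
  - intros [i [<- Hi]]. apply in_seq in Hi. lia.
  - intros H. exists (Z.to_nat (y + Z.of_nat (2 * n))). split; [lia|]. apply in_seq. lia.
Qed.

Lemma window_NoDup n : NoDup (window n).
Proof.
  unfold window. apply FinFun.Injective_map_NoDup; [intros x y H; lia | apply seq_NoDup].
Qed.

Lemma nn_path_abs_le Y : nn_path Y -> forall k, (Z.abs (Y k) <= Z.of_nat k)%Z.
Proof.
  intros [H0 H1]. induction k; [rewrite H0; simpl; lia|]. specialize (H1 k). lia.
Qed.

Lemma eta2n_as_sum Y n y : (1 <= n)%nat ->
  INR (eta2n Y n y) = lsum (seq 0 (2 * n)) (fun k => if Z.eqb (Y k) y then 1 else 0).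
Proof.
  intros Hn. unfold eta2n, eta. replace (S (2 * n - 1)) with (2 * n)%nat by lia.
  apply INR_length_filter.
Qed.

Lemma eta2n_total Y n : nn_path Y -> (1 <= n)%nat ->
  lsum (window n) (fun y => INR (eta2n Y n y)) = 2 * INR n.
Proof.
  intros HY Hn.
  rewrite (lsum_ext_in _ _ (fun y => lsum (seq 0 (2 * n)) (fun k => if Z.eqb (Y k) y then 1 else 0)))
    by (intros; now apply eta2n_as_sum).
  rewrite (lsum_exchange Z.eqb Z.eqb_eq) with (g := fun _ => 1).
  - rewrite lsum_const, length_seq, mult_INR. simpl; ring.
  - apply window_NoDup.
  - intros k Hk. apply in_seq in Hk. apply window_In. pose proof (nn_path_abs_le Y HY k). lia.
Qed.

Lemma eta2n_pos_visited Y n y : (1 <= n)%nat -> 0 < INR (eta2n Y n y) ->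
  exists k, (k < 2 * n)%nat /\ Y k = y.
Proof.
  intros Hn H. unfold eta2n, eta in H. replace (S (2 * n - 1)) with (2 * n)%nat in H by lia.
  destruct (filter (fun k => Z.eqb (Y k) y) (seq 0 (2 * n))) as [|k l] eqn:E; [simpl in H; lra|].
  assert (Hk : In k (filter (fun k => Z.eqb (Y k) y) (seq 0 (2 * n)))) by (rewrite E; left; auto).
  apply filter_In in Hk. destruct Hk as [Hk1 Hk2]. apply in_seq in Hk1. apply Z.eqb_eq in Hk2.
  exists k; split; auto; lia.
Qed.

Lemma window_count_small n X : 0 <= X ->
  lsum (window n) (fun y => if Rltb (IZR (Z.abs y)) X then 1 else 0) <= 2 * X + 1.
Proof.
  intros HX. unfold window. rewrite lsum_map.
  set (a := INR (2 * n) - X). set (b := INR (2 * n) + X).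
  eapply Rle_trans.
  { apply (lsum_seq_le _ _ (fun i => interval_indicator a b (INR i))).
    intros i _. unfold Rltb. destruct (Rlt_dec _ _) as [Hl|Hl]; [|apply interval_indicator_nonneg].
    rewrite abs_IZR, minus_IZR, <- !INR_IZR_INZ in Hl.
    apply Rabs_def2 in Hl. rewrite interval_indicator_in; unfold a, b; lra. }
  eapply Rle_trans; [apply count_in_interval|]. unfold a, b, Rmax, Rmin.
  repeat destruct (Rle_dec _ _); lra.
Qed.

Lemma floor_div_bounds x w : 0 <= x -> 0 < w ->
  let k := Z.to_nat (Int_part (x / w)) in w * INR k <= x <= w * INR k + w.
Proof.
  intros Hx Hw k. assert (0 <= x / w) by (apply Rle_div_of_mult_le; lra).
  destruct (base_Int_part (x / w)) as [H1 H2].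
  assert (Hk : (0 <= Int_part (x / w))%Z).
  { assert (Hlt : IZR (-1) < IZR (Int_part (x / w))) by lra. apply lt_IZR in Hlt. lia. }
  unfold k. rewrite INR_Z_to_nat by auto.
  set (z := IZR (Int_part (x / w))) in *.
  assert (x = w * (x / w)) by (field; lra). split; nra.
Qed.

Lemma env_expect_small_le_flips p f (a : Z -> R) t W rest Lb B :
  NoDup W -> Permutation W (rest ++ Lb) ->
  (forall y, f y = 1%Z \/ f y = (-1)%Z) -> (forall y, 0 <= p y <= 1) ->
  (forall c, flip_expect (map (fun y => (p y / 2, -2 * IZR (f y) * a y)) Lb)
               (small_indicator t) c <= B) ->
  env_expect p f W (fun e => small_indicator t (lsum W (fun y => IZR (e y) * a y))) <= B.
Proof.
  intros Hnd Hperm Hf Hp HB.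
  set (mk := fun y => (p y / 2, -2 * IZR (f y) * a y)).
  rewrite (env_expect_ext p f W _ (fun e => small_indicator t (0 + lsum W (fun y => IZR (e y) * a y))))
    by (intros; now rewrite Rplus_0_l).
  rewrite (env_expect_as_flips p f a _ W Hnd Hf 0). fold mk.
  rewrite (flip_expect_perm _ _ (Permutation_map mk Hperm)), map_app, flip_expect_app.
  apply flip_expect_le_sup; auto.
  intros qd Hqd. apply in_map_iff in Hqd. destruct Hqd as [y [<- _]].
  unfold mk; simpl. pose proof (Hp y). lra.
Qed.

Lemma Permutation_filter_split {A} (P : A -> bool) L :
  Permutation L (filter P L ++ filter (fun x => negb (P x)) L).
Proof.
  induction L as [|a L IH]; simpl; auto. destruct (P a); simpl.
  - now constructor.
  - eapply perm_trans; [apply perm_skip, IH | apply Permutation_middle].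
Qed.

Section GoodSites.

Variables (n : nat) (Y : nat -> Z) (p : Z -> R) (f : Z -> Z) (y0 : Z) (q t T w mus : R).

Hypotheses (HY : nn_path Y) (Hn : (1 <= n)%nat)
  (Hf : forall y, f y = 1%Z \/ f y = (-1)%Z)
  (Hp : forall y, 0 <= p y <= 1)
  (Hrange : forall k, (k <= 2 * n)%nat -> IZR (Z.abs (Y k)) < t)
  (Hlocal : forall y, In y (window n) -> INR (eta2n Y n y) < t)
  (Hq : forall y, (y0 <= Z.abs y)%Z -> IZR (Z.abs y) < t -> q <= p y)
  (Hq0 : 0 <= q) (Hw : 0 < w) (HwT : w <= T / 2) (Hmus : 0 < mus) (Hy0 : (0 <= y0)%Z)
  (Hmass : INR n <= 2 * INR n - t * (2 * IZR y0 + 1) - T * (2 * t + 1))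
  (Hsupply : mus <= (q * INR n / t) / (2 * (t / w + 1))).

Let W := window n.
Let eta y := INR (eta2n Y n y).
Let good y := Rleb T (eta y) && Z.leb y0 (Z.abs y).

Lemma threshold_pos : 0 < t.
Proof.
  pose proof (Hrange 0 ltac:(lia)). pose proof (IZR_le 0 _ (Z.abs_nonneg (Y 0))). lra.
Qed.

Lemma visited_lt y : 0 < eta y -> IZR (Z.abs y) < t.
Proof. intros H. destruct (eta2n_pos_visited Y n y Hn H) as [k [Hk <-]]. apply Hrange. lia. Qed.

Lemma good_spec y : good y = true -> IZR (Z.abs y) < t /\ T <= eta y /\ (y0 <= Z.abs y)%Z.
Proof.
  unfold good. intros H. apply andb_true_iff in H. destruct H as [H1 H2].
  apply Rleb_true in H1. apply Z.leb_le in H2. repeat split; auto. apply visited_lt. lra.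
Qed.

(* The at most 2 y0 + 1 sites with |y| < y0 carry local time < t each, and the sites with
   local time < T lie among the at most 2 t + 1 sites visited; [Hmass] says this is at
   most half of the total local time 2 n. *)
Lemma good_local_time : INR n <= lsum W (fun y => if good y then eta y else 0).
Proof.
  pose proof threshold_pos. pose proof (eta2n_total Y n HY Hn) as Htot. fold W in Htot.
  rewrite (lsum_ext_in W _ (fun y => (if good y then eta y else 0) + (if good y then 0 else eta y)))
    in Htot by (intros; destruct (good x); unfold eta; ring).
  rewrite lsum_plus in Htot.
  set (near y := if Rltb (IZR (Z.abs y)) (IZR y0) then 1 else 0).
  set (seen y := if Rltb (IZR (Z.abs y)) t then 1 else 0).
  assert (Hbad : lsum W (fun y => if good y then 0 else eta y)
                 <= lsum W (fun y => t * near y + T * seen y)).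
  { apply lsum_le. intros y Hy. pose proof (Hlocal y Hy) as Hlt. fold (eta y) in Hlt.
    assert (He : 0 <= eta y) by apply pos_INR.
    assert (0 <= near y) by (unfold near; destruct (Rltb _ _); lra).
    assert (0 <= seen y) by (unfold seen; destruct (Rltb _ _); lra).
    unfold good. destruct (Z.leb y0 (Z.abs y)) eqn:E2.
    - destruct (Rleb T (eta y)) eqn:E1; simpl; [nra|].
      apply Rleb_false in E1. destruct (Rle_dec (eta y) 0); [nra|].
      pose proof (visited_lt y ltac:(lra)).
      unfold seen, Rltb. destruct (Rlt_dec _ _); [|lra]. nra.
    - apply Z.leb_gt, IZR_lt in E2. rewrite andb_false_r.
      unfold near, Rltb. destruct (Rlt_dec _ _); [|lra]. nra. }
  rewrite lsum_plus, !lsum_scal in Hbad.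
  pose proof (window_count_small n (IZR y0) (IZR_le _ _ Hy0)).
  pose proof (window_count_small n t (Rlt_le _ _ threshold_pos)).
  fold W near seen in H0, H1. nra.
Qed.

Lemma good_prob_mass : q * INR n / t <= lsum W (fun y => if good y then p y else 0).
Proof.
  pose proof threshold_pos. pose proof good_local_time.
  apply Rle_trans with (lsum W (fun y => (q / t) * (if good y then eta y else 0))).
  - rewrite lsum_scal. replace (q * INR n / t) with (q / t * INR n) by (field; lra).
    apply Rmult_le_compat_l; auto. apply Rle_div_of_mult_le; lra.
  - apply lsum_le. intros y Hy. destruct (good y) eqn:E; [|lra].
    destruct (good_spec y E) as [H1 [H2 H3]]. pose proof (Hq y H3 H1).
    pose proof (Hlocal y Hy). fold (eta y) in *.
    replace (q / t * eta y) with (q * (eta y / t)) by (field; lra).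
    assert (eta y / t <= 1) by (apply Rdiv_le_of_le_mult; lra).
    assert (0 <= eta y / t) by (apply Rle_div_of_mult_le; lra). nra.
Qed.

Let bin y := Z.to_nat (Int_part (eta y / w)).
Let class_of y := (2 * bin y + (if Z.eqb (f y) 1 then 0 else 1))%nat.
Let num_bins := Z.to_nat (up (t / w)).
Let in_class c y := good y && Nat.eqb (class_of y) c.

Lemma num_bins_bounds : (1 <= num_bins)%nat /\ t / w < INR num_bins <= t / w + 1.
Proof.
  pose proof threshold_pos. destruct (archimed (t / w)) as [H1 H2].
  assert (0 < t / w) by (apply Rdiv_lt_0_compat; lra).
  assert (Hu : (0 < up (t / w))%Z) by (apply lt_IZR; lra).
  unfold num_bins. rewrite INR_Z_to_nat by lia. split; [lia|lra].
Qed.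

Lemma bin_lt y : In y W -> (bin y < num_bins)%nat.
Proof.
  intros Hy. destruct num_bins_bounds as [_ [HN _]].
  pose proof (Hlocal y Hy). fold (eta y) in *.
  destruct (floor_div_bounds (eta y) w (pos_INR _) Hw) as [Hb _]. fold (bin y) in Hb.
  assert (t < w * INR num_bins).
  { replace t with (w * (t / w)) at 1 by (field; lra). apply Rmult_lt_compat_l; lra. }
  apply INR_lt, (Rmult_lt_reg_l w); lra.
Qed.

Lemma exists_heavy_class : exists c, mus <= lsum (filter (in_class c) W) p.
Proof.
  pose proof threshold_pos. destruct num_bins_bounds as [HN1 [HN2 HN3]].
  set (Cs := seq 0 (2 * num_bins)).
  set (cls y := if good y then class_of y else 0%nat).
  assert (Hin : forall y, In y W -> In (cls y) Cs).
  { intros y Hy. unfold cls, Cs. apply in_seq. pose proof (bin_lt y Hy).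
    destruct (good y); [unfold class_of; destruct (Z.eqb (f y) 1)|]; lia. }
  assert (Hne : Cs <> nil) by (unfold Cs; destruct num_bins; [lia|discriminate]).
  destruct (lsum_pigeonhole Cs (fun c => lsum W
      (fun y => if Nat.eqb (cls y) c then (if good y then p y else 0) else 0))
      (q * INR n / t) Hne) as [c [_ Hm]].
  { rewrite (lsum_exchange Nat.eqb Nat.eqb_eq); [apply good_prob_mass|apply seq_NoDup|exact Hin]. }
  exists c. rewrite <- lsum_filter.
  eapply Rle_trans; [|eapply Rle_trans; [apply Hm|right]].
  - eapply Rle_trans; [apply Hsupply|]. unfold Cs. rewrite length_seq, mult_INR. simpl INR.
    assert (0 <= q * INR n) by (apply Rmult_le_pos; auto; apply pos_INR).
    assert (0 <= q * INR n / t) by (apply Rle_div_of_mult_le; lra).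
    assert (0 < t / w) by (apply Rdiv_lt_0_compat; lra).
    apply Rdiv_le_Rdiv; try lra. apply Rmult_le_compat_l; lra.
  - apply lsum_ext_in. intros y _. unfold cls, in_class.
    destruct (good y); simpl; [destruct (Nat.eqb (class_of y) c)|destruct c]; reflexivity.
Qed.

Lemma in_class_band c y y1 : in_class c y = true -> in_class c y1 = true ->
  f y = f y1 /\ w * INR (bin y1) <= eta y <= w * INR (bin y1) + w.
Proof.
  unfold in_class, class_of. rewrite !andb_true_iff, !Nat.eqb_eq. intros [_ Hy] [_ Hy1].
  assert (Hbin : bin y = bin y1 /\ f y = f y1).
  { destruct (Hf y) as [E|E]; destruct (Hf y1) as [E1|E1]; rewrite E, E1 in *;
      simpl in Hy, Hy1; split; lia. }
  destruct Hbin as [<- Hfy]. split; auto. apply floor_div_bounds; [apply pos_INR|auto].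
Qed.

(* Among the sites of a heavy class, a prefix of probability mass between mus and mus + 1
   gives flips of a common sign with amplitudes in a band of width w above v >= T / 2. *)
Lemma env_small_prob_le_band_bound : exists v mu, T / 2 <= v /\ mus <= mu <= mus + 1 /\
  env_expect p f W (fun e => if Rleb (Rabs (Ssum Y n e)) t then 1 else 0) <= band_bound t v w mu.
Proof.
  pose proof threshold_pos.
  destruct exists_heavy_class as [c Hc].
  set (FL := filter (in_class c) W) in *.
  destruct (lsum_prefix_between FL p (fun y _ => Hp y) mus Hmus Hc) as [k [Hk1 Hk2]].
  set (Lb := firstn k FL) in *.
  assert (HLb : forall y, In y Lb -> in_class c y = true).
  { intros y Hy. assert (HFL : In y FL).
    { rewrite <- (firstn_skipn k FL). apply in_or_app; now left. }
    now apply filter_In in HFL. }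
  destruct Lb as [|y1 Lr] eqn:ELb; [rewrite lsum_nil in Hk1; lra|].
  rewrite <- ELb in HLb, Hk1, Hk2.
  assert (Hy1 : in_class c y1 = true) by (apply HLb; rewrite ELb; now left).
  set (v := w * INR (bin y1)).
  assert (Hv : T / 2 <= v).
  { assert (Hgood : good y1 = true) by (apply andb_true_iff in Hy1; tauto).
    destruct (good_spec y1 Hgood) as [_ [HT _]].
    destruct (in_class_band c y1 y1 Hy1 Hy1) as [_ [_ Hub]]. fold v in Hub. lra. }
  exists v, (lsum Lb p). repeat split; [lra|lra|lra|].
  set (s := IZR (f y1)).
  set (mk := fun y => (p y / 2, -2 * IZR (f y) * eta y)).
  apply (env_expect_small_le_flips p f eta t W (skipn k FL ++ filter (fun y => negb (in_class c y)) W) Lb).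
  - apply window_NoDup.
  - eapply perm_trans; [apply (Permutation_filter_split (in_class c))|]. fold FL.
    rewrite <- (firstn_skipn k FL) at 1. fold Lb. rewrite ELb, <- app_assoc.
    apply Permutation_app_comm.
  - exact Hf.
  - exact Hp.
  - intros c0. fold mk.
    assert (Hmu : lsum (map mk Lb) (fun qd => 2 * fst qd) = lsum Lb p).
    { rewrite lsum_map. apply lsum_ext_in. intros y _. unfold mk; simpl; field. }
    rewrite <- Hmu.
    apply (flip_expect_half_band_small s v w t); try lra.
    + unfold s. destruct (Hf y1) as [E|E]; rewrite E; [left|right]; reflexivity.
    + intros qd Hqd. apply in_map_iff in Hqd. destruct Hqd as [y [<- Hy]].
      destruct (in_class_band c y y1 (HLb y Hy) Hy1) as [Hfy Hey].
      unfold mk; simpl. pose proof (Hp y). split; [lra|].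
      exists (eta y). split; auto. simpl. unfold s. rewrite Hfy. ring.
Qed.

End GoodSites.

(** * Choice of scales *)

Lemma scaled_terms_le u : 1 <= u ->
  (2 * u ^ 6 + 8 * u ^ 4 + 1) * (2 / u ^ 7) + 8 * (2 * u ^ 6 + 1 + 4 * u ^ 4) * / u ^ 14
  + 4 * (2 / u ^ 10) <= 100 / u.
Proof.
  intros Hu.
  assert (Hp : forall k, 0 < u ^ k) by (intros; apply pow_lt; lra).
  assert (Hle : forall m k, (m <= k)%nat -> u ^ m <= u ^ k) by (intros; apply Rle_pow; auto).
  replace ((2 * u ^ 6 + 8 * u ^ 4 + 1) * (2 / u ^ 7) + 8 * (2 * u ^ 6 + 1 + 4 * u ^ 4) * / u ^ 14
           + 4 * (2 / u ^ 10))
    with ((4 * u ^ 13 + 16 * u ^ 11 + 2 * u ^ 7 + 16 * u ^ 6 + 40 * u ^ 4 + 8) / u ^ 14)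
    by (field; pose proof (Hp 1%nat); simpl in *; lra).
  apply Rdiv_le_Rdiv; auto; [lra|].
  pose proof (Hle 11%nat 13%nat ltac:(lia)). pose proof (Hle 7%nat 13%nat ltac:(lia)).
  pose proof (Hle 6%nat 13%nat ltac:(lia)). pose proof (Hle 4%nat 13%nat ltac:(lia)).
  assert (1 <= u ^ 13) by (rewrite <- (pow1 13); apply pow_incr; lra).
  replace (u ^ 14) with (u ^ 13 * u) by (simpl; ring).
  assert (0 <= u ^ 13 * u) by (pose proof (Hp 13%nat); nra). nra.
Qed.

Lemma band_bound_scaled_le a u v mu : 0 < a -> 1 <= u -> a / u ^ 4 / 2 <= v ->
  u ^ 14 <= mu <= u ^ 14 + 1 -> band_bound (a * u ^ 2) v (a / u ^ 14) mu <= 100 / u.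
Proof.
  intros Ha Hu Hv Hmu.
  assert (Hp : forall k, 0 < u ^ k) by (intros; apply pow_lt; lra).
  assert (Hp1 : forall k, 1 <= u ^ k) by (intros; rewrite <- (pow1 k); apply pow_incr; lra).
  set (v0 := a / u ^ 4 / 2) in *.
  assert (Hv0 : 0 < v0) by (unfold v0; pose proof (Hp 4%nat);
    apply Rdiv_lt_0_compat; [apply Rdiv_lt_0_compat|]; lra).
  assert (Hmu0 : 0 < mu) by (pose proof (Hp 14%nat); lra).
  set (X := a * u ^ 2 / v). set (WM := a / u ^ 14 * mu / v). set (Z := a / u ^ 14 / v).
  assert (HX : X <= 2 * u ^ 6).
  { apply Rle_trans with (a * u ^ 2 / v0).
    - apply Rdiv_le_Rdiv_den; auto. pose proof (Hp 2%nat); nra.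
    - right. unfold v0. field. split; [|lra]. pose proof (Hp 1%nat); simpl in *; lra. }
  assert (HZ : Z <= 2 / u ^ 10).
  { apply Rle_trans with (a / u ^ 14 / v0).
    - apply Rdiv_le_Rdiv_den; auto. apply Rlt_le, Rdiv_lt_0_compat; auto.
    - right. unfold v0. field. split; [|lra]. pose proof (Hp 1%nat); simpl in *; lra. }
  assert (HWM : WM <= 4 * u ^ 4).
  { assert (0 <= a / u ^ 14) by (apply Rlt_le, Rdiv_lt_0_compat; auto).
    apply Rle_trans with (a / u ^ 14 * (u ^ 14 + 1) / v0).
    - apply Rle_trans with (a / u ^ 14 * mu / v0).
      + apply Rdiv_le_Rdiv_den; auto. apply Rmult_le_pos; lra.
      + apply Rmult_le_compat_r; [apply Rlt_le, Rinv_0_lt_compat; auto|].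
        apply Rmult_le_compat_l; lra.
    - unfold v0. replace (a / u ^ 14 * (u ^ 14 + 1) / (a / u ^ 4 / 2))
        with (2 * u ^ 4 + 2 * (u ^ 4 / u ^ 14))
        by (field; split; [|lra]; pose proof (Hp 1%nat); simpl in *; lra).
      assert (u ^ 4 / u ^ 14 <= u ^ 4).
      { apply Rdiv_le_of_le_mult; auto. pose proof (Hp1 14%nat); pose proof (Hp 4%nat); nra. }
      lra. }
  assert (Hsq : sqrt (4 / mu) <= 2 / u ^ 7).
  { rewrite <- (sqrt_square (2 / u ^ 7)) by (apply Rlt_le, Rdiv_lt_0_compat; auto; lra).
    apply sqrt_le_1_alt.
    replace (2 / u ^ 7 * (2 / u ^ 7)) with (4 / u ^ 14) by (field; pose proof (Hp 1%nat); simpl in *; lra).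
    apply Rdiv_le_Rdiv_den; auto; lra. }
  assert (0 <= X) by (unfold X; apply Rle_div_of_mult_le; [lra|]; pose proof (Hp 2%nat); nra).
  assert (0 <= WM).
  { unfold WM; apply Rle_div_of_mult_le; [lra|]. rewrite Rmult_0_l.
    apply Rmult_le_pos; [apply Rlt_le, Rdiv_lt_0_compat|]; auto; lra. }
  assert (/ mu <= / u ^ 14) by (apply Rinv_le_contravar; auto; lra).
  pose proof (sqrt_pos (4 / mu)).
  unfold band_bound.
  replace ((a * u ^ 2 + 2 * (a / u ^ 14) * mu) / v + 1) with (X + 2 * WM + 1)
    by (unfold X, WM; field; split; [lra|]; pose proof (Hp 14%nat); lra).
  replace (8 * (a * u ^ 2 / v + 1 + a / u ^ 14 * mu / v) / mu) with (8 * (X + 1 + WM) * / mu)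
    by reflexivity.
  replace (4 * (a / u ^ 14) / v) with (4 * Z)
    by (unfold Z; field; split; [lra|]; pose proof (Hp 14%nat); lra).
  assert (T1 : (X + 2 * WM + 1) * sqrt (4 / mu) <= (2 * u ^ 6 + 8 * u ^ 4 + 1) * (2 / u ^ 7))
    by (apply Rmult_le_compat; lra).
  assert (T2 : 8 * (X + 1 + WM) * / mu <= 8 * (2 * u ^ 6 + 1 + 4 * u ^ 4) * / u ^ 14)
    by (apply Rmult_le_compat; try lra; apply Rlt_le, Rinv_0_lt_compat; auto).
  pose proof (scaled_terms_le u Hu).
  lra.
Qed.

Lemma scaled_mass a u K : 2 <= u -> 0 <= K -> 4 * K + 4 <= a / u ^ 2 ->
  a * a <= 2 * (a * a) - a * u ^ 2 * K - a / u ^ 4 * (2 * (a * u ^ 2) + 1).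
Proof.
  intros Hu HK Ha.
  assert (Hs : 4 <= u ^ 2) by (simpl; nra).
  set (G := a / u ^ 2) in *. set (s := u ^ 2) in *.
  assert (HaG : a = G * s) by (unfold G; field; lra).
  replace (a / u ^ 4) with (G / s) by (unfold G, s; field; lra).
  rewrite HaG.
  assert (Hr : G / s <= G) by (apply Rdiv_le_of_le_mult; nra).
  replace (G / s * (2 * (G * s * s) + 1)) with (2 * G * G * s + G / s) by (field; lra).
  assert (s * s * G * K <= G * G * s * s / 4) by (assert (0 <= s * s * G) by nra; nra).
  assert (2 * G * G * s <= G * G * s * s / 2) by (assert (0 <= G * G * s) by nra; nra).
  assert (G <= G * G * s * s / 4) by nra.
  nra.
Qed.

Lemma scaled_supply a u c : 0 < a -> 1 <= u -> 4 * u ^ 32 <= c * a ->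
  u ^ 14 <= (c * (a * a) / (a * u ^ 2)) / (2 * (a * u ^ 2 / (a / u ^ 14) + 1)).
Proof.
  intros Ha Hu Hc.
  assert (Hp : forall k, 0 < u ^ k) by (intros; apply pow_lt; lra).
  replace ((c * (a * a) / (a * u ^ 2)) / (2 * (a * u ^ 2 / (a / u ^ 14) + 1)))
    with (c * a / (u ^ 2 * (2 * (u ^ 16 + 1)))).
  2:{ field. pose proof (Hp 1%nat); pose proof (Hp 14%nat). simpl in *. repeat split; nra. }
  apply Rle_div_of_mult_le.
  { pose proof (Hp 2%nat). pose proof (Hp 16%nat). apply Rmult_lt_0_compat; lra. }
  assert (u ^ 16 <= u ^ 32) by (apply Rle_pow; lia || lra).
  assert (E : u ^ 14 * (u ^ 2 * (2 * (u ^ 16 + 1))) = 2 * u ^ (14 + 2 + 16) + 2 * u ^ (14 + 2))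
    by (rewrite !pow_add; ring).
  cbn [Nat.add] in E. lra.
Qed.

(* With t = a u^2, T = a / u^4, w = a / u^14 and mus = u^14. *)
Lemma env_small_prob_le_inv_scale n Y p f y0 q a u :
  nn_path Y -> (1 <= n)%nat -> INR n = a * a -> 0 < a -> 2 <= u ->
  (forall y, f y = 1%Z \/ f y = (-1)%Z) -> (forall y, 0 <= p y <= 1) ->
  (forall k, (k <= 2 * n)%nat -> IZR (Z.abs (Y k)) < a * u ^ 2) ->
  (forall y, In y (window n) -> INR (eta2n Y n y) < a * u ^ 2) ->
  (forall y, (y0 <= Z.abs y)%Z -> IZR (Z.abs y) < a * u ^ 2 -> q <= p y) ->
  0 <= q -> (0 <= y0)%Z ->
  4 * (2 * IZR y0 + 1) + 4 <= a / u ^ 2 -> 4 * u ^ 32 <= q * a ->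
  env_expect p f (window n)
    (fun e => if Rleb (Rabs (Ssum Y n e)) (a * u ^ 2) then 1 else 0) <= 100 / u.
Proof.
  intros HY Hn Hx Ha Hu Hf Hp Hrange Hlocal Hq Hq0 Hy0 HK Hsup.
  assert (Hp' : forall k, 0 < u ^ k) by (intros; apply pow_lt; lra).
  assert (Hw : 0 < a / u ^ 14) by (apply Rdiv_lt_0_compat; auto).
  destruct (env_small_prob_le_band_bound n Y p f y0 q (a * u ^ 2) (a / u ^ 4) (a / u ^ 14)
              (u ^ 14) HY Hn Hf Hp Hrange Hlocal Hq Hq0 Hw) as [v [mu [Hv [Hmu Hb]]]]; auto.
  - replace (a / u ^ 4 / 2) with (a / (2 * u ^ 4)) by (field; pose proof (Hp' 4%nat); lra).
    apply Rdiv_le_Rdiv_den; [lra|pose proof (Hp' 4%nat); lra|].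
    replace (u ^ 14) with (u ^ 4 * u ^ 10) by (rewrite <- pow_add; reflexivity).
    assert (u ^ 1 <= u ^ 10) by (apply Rle_pow; [lra|lia]).
    pose proof (Hp' 4%nat). simpl pow in *. nra.
  - rewrite Hx. apply scaled_mass; auto. pose proof (IZR_le _ _ Hy0). lra.
  - rewrite Hx. apply scaled_supply; lra.
  - eapply Rle_trans; [apply Hb|]. apply band_bound_scaled_le; lra.
Qed.

Lemma eventually_Rpower_ge g K : 0 < g ->
  exists N, forall n, (N <= n)%nat -> K <= Rpower (INR n) g.
Proof.
  intros Hg. set (K' := Rmax K 1). assert (HK' : 1 <= K') by apply Rmax_r.
  set (z := Rpower K' (/ g)). assert (Hz : 0 < z) by (unfold z, Rpower; apply exp_pos).
  destruct (archimed z) as [H1 _].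
  exists (Z.to_nat (up z)). intros n Hn.
  assert (Hup : (0 < up z)%Z) by (apply lt_IZR; lra).
  assert (z <= INR n).
  { apply Rle_trans with (INR (Z.to_nat (up z))); [rewrite INR_Z_to_nat by lia; lra|].
    now apply le_INR. }
  apply Rle_trans with K'; [apply Rmax_l|].
  replace K' with (Rpower z g).
  - apply Rle_Rpower_l; lra.
  - unfold z. rewrite Rpower_mult, Rinv_l by lra. apply Rpower_1. lra.
Qed.

Lemma Rpower_pow_mult x c k : 0 < x -> Rpower x c ^ k = Rpower x (INR k * c).
Proof.
  intros Hx. rewrite <- Rpower_pow by (unfold Rpower; apply exp_pos).
  rewrite Rpower_mult. f_equal; ring.
Qed.

Lemma Rpower_half_scales x e : 0 < x ->
  let a := Rpower x (/2) in let u := Rpower x (e / 2) in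
  x = a * a /\ Rpower x (/2 + e) = a * u ^ 2 /\ Rpower x (- (e / 2)) = / u /\
  forall k c, Rpower x c * a / u ^ k = Rpower x (c + /2 - INR k * (e / 2)).
Proof.
  intros Hx a u. unfold a, u. repeat split.
  - rewrite <- Rpower_plus, <- (Rpower_1 x) at 1 by auto. f_equal. lra.
  - rewrite Rpower_pow_mult, <- Rpower_plus by auto. f_equal. simpl. field.
  - apply Rpower_Ropp.
  - intros k c. rewrite Rpower_pow_mult by auto.
    unfold Rminus. rewrite !Rpower_plus, Rpower_Ropp. field.
    apply Rgt_not_eq. unfold Rpower; apply exp_pos.
Qed.

Lemma power_law_lower c0 beta b r t : 0 < c0 -> beta <= b -> 0 <= b -> 1 <= r -> r < t ->
  c0 * Rpower t (- b) <= c0 * Rpower r (- beta).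
Proof.
  intros Hc0 Hb Hb0 Hr Ht. apply Rmult_le_compat_l; [lra|].
  apply Rle_trans with (Rpower r (- b)).
  - rewrite !Rpower_Ropp. apply Rinv_le_contravar; [unfold Rpower; apply exp_pos|].
    apply Rle_Rpower_l; lra.
  - apply Rle_Rpower; lra.
Qed.

(* The exponent e = (1 - b) / 40 leaves room for every power of u = n^(e/2) used above. *)
Lemma scales_eventually b c0 K : 0 <= b < 1 -> 0 < c0 ->
  let e := (1 - b) / 40 in
  exists N, forall n, (N <= n)%nat ->
    let x := INR n in let a := Rpower x (/2) in let u := Rpower x (e / 2) in
    (1 <= n)%nat /\ 2 <= u /\ K <= a / u ^ 2 /\ 4 * u ^ 32 <= c0 * Rpower (a * u ^ 2) (- b) * a.
Proof.
  intros Hb Hc0 e. assert (He : 0 < e) by (unfold e; lra).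
  destruct (eventually_Rpower_ge (e / 2) 2) as [N1 HN1]; [lra|].
  destruct (eventually_Rpower_ge (/2 - e) K) as [N2 HN2]; [unfold e; lra|].
  destruct (eventually_Rpower_ge (e * (4 - b)) (4 / c0)) as [N3 HN3]; [nra|].
  exists (Nat.max 1 (Nat.max N1 (Nat.max N2 N3))). intros n Hn x a u.
  assert (Hx : 0 < x) by (unfold x; apply lt_0_INR; lia).
  assert (Hu : 2 <= u) by (apply HN1; lia).
  assert (Hp : forall k, 0 < u ^ k) by (intros; apply pow_lt; lra).
  destruct (Rpower_half_scales x e Hx) as (_ & Hau & _ & Hshift). fold a u in Hau, Hshift.
  repeat split; [lia|exact Hu| |].
  - replace (a / u ^ 2) with (Rpower x 0 * a / u ^ 2) by (rewrite Rpower_O; [field|]; lra).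
    rewrite Hshift. simpl INR.
    replace (0 + / 2 - (1 + 1) * (e / 2)) with (/2 - e) by field. apply HN2; lia.
  - assert (H4 : 4 / c0 <= Rpower (a * u ^ 2) (- b) * a / u ^ 32).
    { rewrite <- Hau, Rpower_mult, Hshift.
      replace ((/ 2 + e) * - b + / 2 - INR 32 * (e / 2)) with (e * (4 - b))
        by (unfold e; simpl INR; field).
      apply HN3; lia. }
    pose proof (Hp 32%nat).
    apply (Rmult_le_compat_l (c0 * u ^ 32)) in H4; [|nra].
    replace (c0 * u ^ 32 * (4 / c0)) with (4 * u ^ 32) in H4 by (field; lra).
    replace (c0 * u ^ 32 * (Rpower (a * u ^ 2) (- b) * a / u ^ 32))
      with (c0 * Rpower (a * u ^ 2) (- b) * a) in H4 by (field; lra).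
    exact H4.
Qed.

Lemma A_n_true Y n d1 d2 : A_n Y n d1 d2 = true ->
  (forall k, (k <= 2 * n)%nat -> IZR (Z.abs (Y k)) < Rpower (INR n) (/2 + d1)) /\
  (forall y, In y (window n) -> INR (eta2n Y n y) < Rpower (INR n) (/2 + d2)).
Proof.
  unfold A_n, A_n1, A_n2. rewrite andb_true_iff, !forallb_forall. intros [H1 H2]. split.
  - intros k Hk. apply Rltb_true, H1, in_seq. lia.
  - intros y Hy. now apply Rltb_true, H2.
Qed.

Theorem proposition7 :
  forall (beta : R), beta < 1 ->
  forall (Q : Z) (f : Z -> Z) (c0 : R) (p : Z -> R),
    (2 <= Q)%Z -> Z.Even Q ->
    (forall y, f y = 1%Z \/ f y = (-1)%Z) ->
    (forall y, f (y + Q)%Z = f y) ->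
    fold_right Z.add 0%Z (map f (map (fun i => Z.of_nat i + 1)%Z (seq 0 (Z.to_nat Q)))) = 0%Z ->
    0 < c0 ->
    (forall y, 0 <= p y <= 1) ->
    (exists Y0 : Z, forall y : Z, (Y0 <= Z.abs y)%Z ->
        p y = c0 * Rpower (IZR (Z.abs y)) (- beta)) ->
  exists d1 d2 d3 dbeta C : R,
    0 < d1 /\ 0 < d2 /\ 0 < d3 /\ 0 < dbeta /\
    exists N : nat, forall n : nat, (N <= n)%nat ->
      forall Y : nat -> Z, nn_path Y ->
        cond_prob_AnBn p f Y n d1 d2 d3 <= C * Rpower (INR n) (- dbeta).
Proof.
  intros beta Hbeta Q f c0 p _ _ Hf _ _ Hc0 Hp [Y0 HY0].
  set (b := Rmax beta 0).
  assert (Hb : 0 <= b < 1) by (unfold b, Rmax; destruct (Rle_dec beta 0); lra).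
  set (y0 := Z.max Y0 1).
  destruct (scales_eventually b c0 (4 * (2 * IZR y0 + 1) + 4) Hb Hc0) as [N HN].
  set (e := (1 - b) / 40) in HN. assert (He : 0 < e) by (unfold e; lra).
  exists e, e, e, (e / 2), 100. repeat split; try lra.
  exists N. intros n Hn Y HY.
  destruct (HN n Hn) as (Hn1 & Hu & HK & Hsup).
  assert (Hx : 0 < INR n) by (apply lt_0_INR; lia).
  destruct (Rpower_half_scales (INR n) e Hx) as (Hxa & Ht & Hdecay & _).
  set (a := Rpower (INR n) (/2)) in *. set (u := Rpower (INR n) (e / 2)) in *.
  assert (Ha : 0 < a) by (unfold a, Rpower; apply exp_pos).
  unfold cond_prob_AnBn. rewrite Hdecay.
  destruct (A_n Y n e e) eqn:HA;
    [|rewrite Rmult_0_l; pose proof (Rinv_0_lt_compat u ltac:(lra)); lra].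
  destruct (A_n_true Y n e e HA) as [Hrange Hlocal]. rewrite Ht in Hrange, Hlocal |- *.
  rewrite Rmult_1_l.
  apply (env_small_prob_le_inv_scale n Y p f y0 (c0 * Rpower (a * u ^ 2) (- b)) a u); auto.
  - intros y Hy1 Hy2. rewrite HY0 by lia.
    apply power_law_lower; auto; [apply Rmax_l|apply Rmax_r|apply IZR_le; lia].
  - apply Rmult_le_pos; [lra|apply Rlt_le; unfold Rpower; apply exp_pos].
  - lia.
Qed.
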